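(* Let $G$ be a graph of order $n \ge 3$. Suppose that for every vertex $v \in V(G)$ and for all $u \in N(v)$ we have $\deg_{\langle N(v)\rangle}(u) \ge \deg_G(v)/2$. Then $G$ is hamiltonian and $\{1,2\}$-extendable.
   Context: $N(v)$ denotes the open neighbourhood of $v$ and $\langle X\rangle$ the subgraph of $G$ induced by $X \subseteq V(G)$. A graph $G$ is $\{1,2\}$-extendable if for every non-hamiltonian cycle $C$ of $G$ there exists a cycle $C'$ of length $|C|+1$ or $|C|+2$ whose vertex set contains all vertices of $C$. *)

(* Finite simple graphs as symmetric irreflexive relations on a finType. *)
From mathcomp Require Import all_boot.
Set Implicit Arguments. Unset Strict Implicit. Unset Printing Implicit Defensive.

Section Graphs.
Variable T : finType.
Variable e : rel T.

Definition simple_graph := symmetric e /\ irreflexive e.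

Definition connected_graph := forall x y : T, connect e x y.

Definition nbhd (v : T) : {set T} := [set u | e v u].

Definition deg (v : T) : nat := #|nbhd v|.

(* degree of u in the induced subgraph <X> (for u in X): number of neighbours of u in X *)
Definition deg_in (X : {set T}) (u : T) : nat := #|nbhd u :&: X|.

Definition is_graph_cycle (c : seq T) : Prop :=
  [/\ uniq c, 3 <= size c & cycle e c].

Definition hamiltonian_cycle (c : seq T) : Prop :=
  is_graph_cycle c /\ size c = #|T|.

Definition hamiltonian : Prop := exists c, hamiltonian_cycle c.

Definition extendable12 : Prop :=
  forall c, is_graph_cycle c -> ~ hamiltonian_cycle c ->
    exists c', [/\ is_graph_cycle c',
                   size c' = (size c).+1 \/ size c' = (size c).+2
                 & {subset c <= c'}].
End Graphs.

(** Every non-hamiltonian cycle [C] of such a graph extends to a cycle through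
   one more vertex; starting from a triangle this yields a hamiltonian cycle.
   By connectivity some vertex [o] outside [C] has a neighbour on [C].  If an
   outside vertex is adjacent to two consecutive vertices of [C] we insert it;
   if [o] is adjacent to [a] and [b] whose successors [a+] and [b+] are
   adjacent, the cycle [o a ... b+ a+ ... b o] works.  Otherwise let [X] be
   the neighbours of [o] on [C] and count the pairs [(a, z)] of [X] with [z]
   adjacent to both [a] and [a+].  Applying the hypothesis at [a] to [o] and
   to [a+], the sets [N(a) ∩ N(o)] and [N(a) ∩ N(a+)] have sizes summing to at
   least [|N(a)|], yet their union misses [o], [a+] and the successors of all
   [b] with [(b, a)] counted.  Their intersection lies in [X], so every [a] has
   at least two more counted pairs starting at it than ending at it, which is
   absurd. *)

From mathcomp Require Import all_boot zify.

Set Implicit Arguments. Unset Strict Implicit. Unset Printing Implicit Defensive.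

Lemma next_cat_cons (T : eqType) (s1 s2 : seq T) x :
  uniq (s1 ++ x :: s2) -> next (s1 ++ x :: s2) x = head (head x s1) s2.
Proof.
move=> U; rewrite -(next_rot (size s1) U x) rot_size_cat {U}.
by case: s2 => [|y s2]; case: s1 => [|z s1] /=; rewrite eqxx.
Qed.

Lemma perm_cross (T : eqType) (a b o : T) p q :
  perm_eq (a :: rev q ++ p ++ [:: b; o]) (o :: a :: p ++ b :: q).
Proof. by apply/permP => P; rewrite /= !count_cat count_rev /=; lia. Qed.

Lemma path_connect_exit (T : eqType) (e : rel T) (A : {pred T}) x p :
  x \in A -> path e x p -> last x p \notin A ->
  exists2 y, y \in A & exists2 z, z \notin A & e y z.
Proof.
elim: p x => [|y p IHp] x Ax /=; first by rewrite Ax.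
case/andP=> exy pyp; case: (boolP (y \in A)) => [Ay|nAy]; first exact: IHp.
by exists x => //; exists y.
Qed.

Lemma card_set_sum (T : finType) (A : {set T}) (P : pred T) :
  #|[set z in A | P z]| = \sum_(z in A) P z.
Proof. by rewrite -sum1dep_card big_mkcondr; apply: eq_bigr => z _; case: (P z). Qed.

Lemma sum_outdeg_indeg (T : finType) (X : {set T}) (R : rel T) :
  \sum_(a in X) #|[set z in X | R a z]| = \sum_(z in X) #|[set a in X | R a z]|.
Proof.
under eq_bigr do rewrite card_set_sum.
by rewrite exchange_big; apply: eq_bigr => z _; rewrite card_set_sum.
Qed.

Lemma card_setDU_leq_setI (T : finType) (N M K : {set T}) : M :|: K \subset N ->
  #|N| <= 2 * #|M| -> #|N| <= 2 * #|K| -> #|N :\: (M :|: K)| <= #|M :&: K|.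
Proof. by move=> MK_N dM dK; rewrite cardsDS //; have := cardsUI M K; lia. Qed.

Section Extension.
Variables (T : finType) (e : rel T).
Hypotheses (esym : symmetric e) (eirr : irreflexive e).

Lemma rev_rcons_path x s y : path e x (rcons s y) -> path e y (rcons (rev s) x).
Proof.
move=> pxy; have esym' : (fun z => e^~ z) =2 e by move=> a b; exact: esym.
have := rev_path e x (rcons s y).
by rewrite last_rcons belast_rcons rev_cons (eq_path esym') pxy.
Qed.

Definition extension (c : seq T) :=
  exists c', [/\ is_graph_cycle e c', size c' = (size c).+1 & {subset c <= c'}].

Lemma graph_cycle_rot n c : is_graph_cycle e c -> is_graph_cycle e (rot n c).
Proof. by case=> Uc Sc Cc; split; rewrite ?rot_uniq ?size_rot ?rot_cycle. Qed.

Lemma extension_rot n c : extension (rot n c) -> extension c.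
Proof.
case=> c' [gc' sz sub]; exists c'; split; first by [].
- by rewrite sz size_rot.
- by move=> x xc; apply: sub; rewrite mem_rot.
Qed.

Lemma extension_of_perm c o c' :
  is_graph_cycle e c -> o \notin c -> perm_eq c' (o :: c) -> cycle e c' -> extension c.
Proof.
case=> Uc Sc _ oc pc' Cc'; exists c'; rewrite (perm_size pc'); split => //.
- by split; rewrite ?(perm_uniq pc') ?(perm_size pc') /= ?oc ?Uc ?leqW.
- by move=> x xc; rewrite (perm_mem pc') inE xc orbT.
Qed.

Lemma insert_extension c a u : is_graph_cycle e c -> a \in c -> u \notin c ->
  e a u -> e u (next c a) -> extension c.
Proof.
move=> gc ac uc au; have [Uc _ _] := gc.
case: (rot_to ac) => i s def_c; rewrite -(next_rot i Uc) def_c => ub.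
apply: (extension_rot (n := i)); move: uc ub (graph_cycle_rot i gc).
rewrite -(mem_rot i) def_c; case: s {def_c} => [|b s] uc; first by move=> _ [].
rewrite /= eqxx => ub gcs.
apply: (extension_of_perm (c' := [:: a, u, b & s]) gcs uc).
  by apply/permP => P /=; rewrite addnCA.
by have [_ _] := gcs; rewrite /= au ub => /andP[_ ->].
Qed.

Lemma cross_extension c o a b : is_graph_cycle e c -> a \in c -> b \in c -> a != b ->
  o \notin c -> e o a -> e o b -> ~~ e o (next c a) -> ~~ e o (next c b) ->
  e (next c a) (next c b) -> extension c.
Proof.
move=> gc ac bc ab oc oa ob; have [Uc _ _] := gc.
case: (rot_to_arc Uc ac bc ab) => i p q _ _ def_c.
have Ucs : uniq (a :: p ++ b :: q) by rewrite -def_c rot_uniq.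
rewrite -!(next_rot i Uc) def_c (next_cat_cons (s1 := [::]) Ucs).
rewrite -cat_cons (next_cat_cons (s1 := a :: p) Ucs).
case: p {Ucs} def_c => [|p1 p] def_c /=; first by rewrite ob.
case: q def_c => [|q1 q] def_c /=; first by rewrite oa.
move=> _ _ pq; apply: (extension_rot (n := i)); move: oc (graph_cycle_rot i gc).
rewrite -(mem_rot i) def_c => oc gcs.
apply: (extension_of_perm (c' := a :: rev (q1 :: q) ++ p1 :: p ++ [:: b; o]) gcs oc).
  exact: perm_cross.
have [_ _] := gcs; rewrite /= rcons_cat cat_path /= => /and3P[_ pp /and3P[lb _ qa]].
rewrite rev_cons rcons_cat cat_path (rev_rcons_path qa) last_rcons /= rcons_cat cat_path.
by rewrite esym pq pp /= lb esym ob oa.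
Qed.

Hypothesis nbhd_dense :
  forall v u, u \in nbhd e v -> deg e v <= 2 * deg_in e (nbhd e v) u.

Section NoExtension.
Variables (c : seq T) (o : T).
Hypotheses (Uc : uniq c) (Cc : cycle e c) (oc : o \notin c).
Hypothesis no_insert :
  forall u a, u \notin c -> a \in c -> e u a -> ~~ e u (next c a).
Hypothesis no_cross : forall a b, a \in c -> b \in c -> a != b ->
  e o a -> e o b -> ~~ e (next c a) (next c b).

Local Notation nx := (next c).
Let X := [set a in c | e o a].
Let R a z := e a z && e (nx a) z.

Lemma indeg_add2_le_outdeg a : a \in X ->
  #|[set b in X | R b a]| + 2 <= #|[set z in X | R a z]|.
Proof.
rewrite inE => /andP[ac oa].
set N := nbhd e a; set M := nbhd e o :&: N; set K := nbhd e (nx a) :&: N.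
set I := [set nx b | b in [set b in X | R b a]].
have nx_inj : injective nx := can_inj (prev_next Uc).
have nac : nx a \in c by rewrite mem_next.
have oa' : ~~ e o (nx a) by exact: no_insert.
have MK_succ : M :&: K \subset [set z in X | R a z].
  apply/subsetP => z; rewrite !inE => /andP[/andP[oz az] /andP[nz _]].
  rewrite /R oz az nz !andbT; apply: contraT => zc.
  by have := no_insert zc ac; rewrite esym az esym nz => /(_ isT).
have outside y : y \in N -> ~~ e o y -> ~~ e (nx a) y -> y \in N :\: (M :|: K).
  by move=> yN oy ay; rewrite in_setD yN !inE (negbTE oy) (negbTE ay).
have I_out : I \subset N :\: (M :|: K).
  apply/subsetP => _ /imsetP[b /setIdP[/setIdP[bc ob] /andP[ba nba]] ->].
  apply: outside; first by rewrite inE esym.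
    exact: no_insert.
  by apply: no_cross => //; apply: contraTneq ba => ->; rewrite eirr.
have oN : o \in N by rewrite inE esym.
have naN : nx a \in N by rewrite inE next_cycle.
have dM : #|N| <= 2 * #|M| := nbhd_dense oN.
have dK : #|N| <= 2 * #|K| := nbhd_dense naN.
have o_out : o \in N :\: (M :|: K) by apply: outside; rewrite // ?eirr // esym.
have na_out : nx a \in N :\: (M :|: K) by apply: outside; rewrite ?eirr.
have cardS : #|o |: (nx a |: I)| = #|[set b in X | R b a]| + 2.
  rewrite !cardsU1 card_imset // !inE negb_or.
  have -> : o != nx a by apply: contraNneq oc => ->.
  have -> : o \notin I.
    by apply/imsetP=> -[b /setIdP[/setIdP[bc _] _] ob]; move: oc; rewrite ob mem_next bc.
  suff -> : nx a \notin I by rewrite /= !add1n addn2.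
  by apply/imsetP=> -[b /setIdP[_ /andP[ba _]] /nx_inj ab]; rewrite ab eirr in ba.
have S_sub : o |: (nx a |: I) \subset N :\: (M :|: K).
  by rewrite !subUset !sub1set o_out na_out I_out.
have MK_sub : M :|: K \subset N by rewrite subUset !subsetIr.
rewrite -cardS (leq_trans (subset_leq_card S_sub)) //.
exact: leq_trans (card_setDU_leq_setI MK_sub dM dK) (subset_leq_card MK_succ).
Qed.

Lemma no_nbhd_on_cycle a : a \in c -> ~~ e o a.
Proof.
move=> ac; apply/negP => oa.
have X_gt0 : 0 < #|X| by apply/card_gt0P; exists a; rewrite inE ac oa.
have : \sum_(b in X) (#|[set z in X | R z b]| + 2)
         <= \sum_(b in X) #|[set z in X | R b z]|.
  exact: leq_sum indeg_add2_le_outdeg.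
rewrite big_split sum_nat_const /= sum_outdeg_indeg -[X in _ <= X]addn0 leq_add2l.
by rewrite leqNgt muln_gt0 X_gt0.
Qed.

End NoExtension.

Lemma extension_of_nonhamiltonian c : connected_graph e ->
  is_graph_cycle e c -> size c != #|T| -> extension c.
Proof.
move=> conn gc nTc; have [Uc Sc Cc] := gc.
have [v vc] : exists v, v \notin c.
  case: (pickP [predC c]) => [v vc | c_full]; first by exists v.
  case/eqP: nTc; rewrite -(card_uniqP Uc).
  by apply: eq_card => x; rewrite (negbFE (c_full x)).
have c0 : nth v c 0 \in c by rewrite mem_nth // (leq_trans _ Sc).
have [p pv v_last] := connectP (conn (nth v c 0) v).
have last_out : last (nth v c 0) p \notin c by rewrite -v_last.
have [x xc [o oc xo]] := path_connect_exit c0 pv last_out.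
case: (boolP [exists (u | u \notin c), exists a in c, e u a && e u (next c a)]).
  case/existsP=> u /andP[uc /exists_inP[a ac /andP[ua un]]].
  by apply: (insert_extension gc ac uc _ un); rewrite esym.
move=> no_ins; have no_insert u a : u \notin c -> a \in c -> e u a -> ~~ e u (next c a).
  move=> uc ac ua; apply: contra no_ins => un.
  by apply/existsP; exists u; rewrite uc; apply/exists_inP; exists a; rewrite ?ua.
case: (boolP [exists a in c, exists b in c,
                [&& a != b, e o a, e o b & e (next c a) (next c b)]]).
  case/exists_inP=> a ac /exists_inP[b bc /and4P[ab oa ob nab]].
  by apply: (cross_extension gc ac bc ab oc oa ob _ _ nab); apply: no_insert.
move=> no_cr; have no_cross a b : a \in c -> b \in c -> a != b ->
    e o a -> e o b -> ~~ e (next c a) (next c b).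
  move=> ac bc ab oa ob; apply: contra no_cr => nab.
  by apply/exists_inP; exists a => //; apply/exists_inP; exists b; rewrite ?ab ?oa ?ob.
by have := no_nbhd_on_cycle Uc Cc oc no_insert no_cross xc; rewrite esym xo.
Qed.

Lemma triangle_of_edge v u : e v u -> exists2 x, e v x & e u x.
Proof.
move=> vu; have uN : u \in nbhd e v by rewrite inE.
have /card_gt0P[x] : 0 < deg_in e (nbhd e v) u.
  rewrite -(ltn_pmul2l (isT : 0 < 2)) muln0 (leq_trans _ (nbhd_dense uN)) //.
  by apply/card_gt0P; exists u.
by rewrite !inE => /andP[ux vx]; exists x.
Qed.

Lemma graph_cycle_exists : connected_graph e -> 1 < #|T| -> exists c, is_graph_cycle e c.
Proof.
move=> conn /card_gt1P[v [w [_ _ vw]]].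
have [[|u p] /= vp w_last] := connectP (conn v w); first by rewrite w_last eqxx in vw.
have [vu _] := andP vp; have [x vx ux] := triangle_of_edge vu.
have neq y z : e y z -> y != z by apply: contraTneq => ->; rewrite eirr.
exists [:: v; u; x]; split => //=; last by rewrite vu ux esym vx.
by rewrite !inE negb_or !neq.
Qed.

End Extension.

Lemma hamiltonian_of_extensions (T : finType) (e : rel T) :
  (exists c, is_graph_cycle e c) ->
  (forall c, is_graph_cycle e c -> size c != #|T| -> extension e c) -> hamiltonian e.
Proof.
move=> [c gc] ext; have [n] := ubnP (#|T| - size c).
elim: n => // n IHn in c gc *.
have [cT _ | nTc] := eqVneq (size c) #|T|; first by exists c.
have c_lt_T : size c < #|T|.
  by have [Uc _ _] := gc; rewrite ltn_neqAle nTc -(card_uniqP Uc) max_card.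
have [c' [gc' sz _]] := ext c gc nTc => Tc_lt; apply: IHn gc' _.
by rewrite sz subnS -ltnS prednK // subn_gt0.
Qed.

Theorem mainTheorem2 (T : finType) (e : rel T) :
  simple_graph e -> connected_graph e -> 3 <= #|T| ->
  (forall v u : T, u \in nbhd e v -> (deg e v <= 2 * deg_in e (nbhd e v) u)%N) ->
  hamiltonian e /\ extendable12 e.
Proof.
move=> [esym eirr] conn T_ge3 dense.
have ext c : is_graph_cycle e c -> size c != #|T| -> extension e c.
  exact: extension_of_nonhamiltonian esym eirr dense c conn.
split.
  by apply: hamiltonian_of_extensions ext; apply: graph_cycle_exists => //; apply: ltnW.
move=> c gc nh; have nTc : size c != #|T| by apply/eqP => cT; apply: nh.
by have [c' [gc' sz sub]] := ext c gc nTc; exists c'; split => //; left.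
Qed.
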